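(* Let $B$ be a finite set of spins and let $w_{i,j}=w_{j,i}\ge 0$ (for distinct $i,j\in B$) be interaction strengths. For a cluster $\mathcal S\subseteq B$ with $|\mathcal S|\ge 2$, define its heuristic strength $s(\mathcal S)$ as the largest value $s\in\{w_{i,j}: i,j\in\mathcal S, i\ne j\}$ such that the graph on vertex set $\mathcal S$ with edges $\{\{i,j\}: i,j\in\mathcal S,\ w_{i,j}\ge s\}$ is connected (equivalently, the smallest interaction necessary to complete the connectivity of $\mathcal S$ when interactions among its spins are added in order of decreasing strength); for $|\mathcal S|=1$ set $s(\mathcal S)=+\infty$. Then for any cluster $\mathcal S$ with $|\mathcal S|\ge 2$ and any spin $i\in\mathcal S$, there exists a sub-cluster $\mathcal C\subseteq\mathcal S$ with $i\in\mathcal C$, $|\mathcal C|=|\mathcal S|-1$, and $s(\mathcal C)\ge s(\mathcal S)$.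
   Context: Clusters are arbitrary subsets of spins; ''sub-cluster'' means subset. *)

From HB Require Import structures.
From mathcomp Require Import all_boot all_order all_algebra.
Set Implicit Arguments. Unset Strict Implicit. Unset Printing Implicit Defensive.
Import Order.TTheory GRing.Theory Num.Theory.
Local Open Scope ring_scope.

Section Strength.
Variables (R : realFieldType) (B : finType) (w : B -> B -> R).

Definition thr_edge (S : {set B}) (s : R) : rel B :=
  fun i j => [&& i \in S, j \in S, i != j & s <= w i j].

Definition thr_connected (S : {set B}) (s : R) : bool :=
  [forall i in S, forall j in S, connect (thr_edge S s) i j].

Definition int_values (S : {set B}) : seq R :=
  [seq w p.1 p.2 | p <- enum (setX S S) & p.1 != p.2].

Definition good_values (S : {set B}) : seq R :=
  [seq s <- int_values S | thr_connected S s].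

(* Heuristic strength, with None standing for +infinity (|S| <= 1):
   the largest good value. *)
Definition strength (S : {set B}) : option R :=
  if (#|S| <= 1)%N then None
  else Some (foldr Num.max (head 0 (good_values S)) (good_values S)).

End Strength.

Definition ge_ext (R : realFieldType) (a b : option R) : bool :=
  match a, b with
  | None, _ => true
  | Some _, None => false
  | Some x, Some y => y <= x
  end.

From mathcomp Require Import all_boot all_order all_algebra.
Set Implicit Arguments. Unset Strict Implicit. Unset Printing Implicit Defensive.
Import Order.TTheory GRing.Theory Num.Theory.

(* The threshold graph of S at its strength s is connected.  Remove a spin
   j <> i at maximal breadth-first distance from i: a shortest path from i to
   any other spin never passes through j, so the threshold-s graph on S \ j is
   still connected.  Raising s to the least interaction >= s inside S \ j does
   not change that graph, so S \ j has a connecting interaction value >= s. *)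

Section Distance.
Variables (T : finType) (e : rel T) (i : T).

Fixpoint within n y : bool :=
  if n is n'.+1 then within n' y || [exists z, within n' z && e z y]
  else y == i.

Lemma within_path p x m : path e x p -> within m x ->
  within (m + size p) (last x p).
Proof.
elim: p x m => [|y p IHp] x m /=; first by rewrite addn0.
case/andP=> exy pp mx; rewrite addnS -addSn; apply: IHp => //=.
by apply/orP; right; apply/existsP; exists x; rewrite mx.
Qed.

Lemma exists_within_or_unreachable y :
  exists n, within n y || ~~ connect e i y.
Proof.
case: (boolP (connect e i y)) => [/connectP[p pp ->]|_].
  by exists (size p); rewrite (within_path (m := 0)) //= eqxx.
by exists 0; rewrite orbT.
Qed.

Lemma within_connect n y : within n y -> connect e i y.
Proof.
elim: n y => [|n IHn] y /=; first by move/eqP->.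
case/orP=> [/IHn //|/existsP[z /andP[/IHn iz ezy]]].
exact: connect_trans iz (connect1 ezy).
Qed.

(* Breadth-first distance from [i]; it is [0] on unreachable vertices. *)
Definition dist y := ex_minn (exists_within_or_unreachable y).

Lemma dist_min n y : within n y -> (dist y <= n)%N.
Proof.
by rewrite /dist; case: ex_minnP => m _ minm wn; apply: minm; rewrite wn.
Qed.

Lemma within_dist y : connect e i y -> within (dist y) y.
Proof. by move=> cy; rewrite /dist; case: ex_minnP => n; rewrite cy orbF. Qed.

Lemma dist_root : dist i = 0.
Proof. by apply/eqP; rewrite -leqn0 (dist_min (n := 0)) //= eqxx. Qed.

Lemma dist_eq0 y : connect e i y -> dist y = 0 -> y = i.
Proof. by move=> /within_dist + dy0; rewrite dy0 => /eqP. Qed.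

Lemma dist_pred y n : connect e i y -> dist y = n.+1 ->
  exists2 z, dist z = n & e z y.
Proof.
move=> /within_dist + dyn; rewrite dyn /= => /orP[/dist_min|].
  by rewrite dyn ltnn.
case/existsP=> z /andP[wz ezy]; exists z => //.
apply/eqP; rewrite eqn_leq dist_min //= -ltnS -dyn dist_min //=.
apply/orP; right; apply/existsP; exists z.
by rewrite ezy andbT within_dist // (within_connect wz).
Qed.
End Distance.

Lemma exists_noncut_vertex (T : finType) (e : rel T) (V : {set T}) (i : T) :
  i \in V -> (1 < #|V|)%N ->
  {in V, forall y, connect [rel x y in V | e x y] i y} ->
  exists2 j, j \in V :\ i &
    {in V :\ j, forall y, connect [rel x y in V :\ j | e x y] i y}.
Proof.
move=> iV V2 Vc; set f := [rel x y in V | e x y].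
have /set0Pn[y0 y0V] : V :\ i != set0.
  by rewrite -card_gt0; move: V2; rewrite (cardsD1 i) iV.
have [j jVi jmax] := @arg_maxnP _ y0 (mem (V :\ i)) (dist f i) y0V.
exists j => //; have jV : j \in V by case/setD1P: jVi.
have dist_le y : y \in V -> (dist f i y <= dist f i j)%N.
  case: (eqVneq y i) => [-> _|yi yV]; first by rewrite dist_root.
  by apply: jmax; rewrite !inE yi.
suff reach n y : y \in V :\ j -> dist f i y = n ->
    connect [rel x y in V :\ j | e x y] i y by move=> y /reach; apply.
elim: n y => [|n IHn] y /setD1P[yj yV] dy.
  by rewrite (dist_eq0 (Vc y yV) dy) connect0.
have [z dz /andP[/andP[zV _] ezy]] := dist_pred (Vc y yV) dy.
have zj : z != j.
  by apply: contraTneq (dist_le y yV) => <-; rewrite dy dz -ltnNge.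
apply: connect_trans (IHn z _ dz) (connect1 _); first by rewrite !inE zj zV.
by rewrite /= !inE zj zV yj yV.
Qed.

Local Open Scope ring_scope.

Lemma mem_foldr_max (R : realDomainType) (a : R) (l : seq R) :
  foldr Num.max a l \in a :: l.
Proof.
elim: l => [|x l IHl] /=; first exact: mem_head.
rewrite /Num.max; case: ifP => _; last by rewrite !inE eqxx orbT.
by move: IHl; rewrite !inE => /orP[->|->]; rewrite ?orbT.
Qed.

Lemma le_foldr_max (R : realDomainType) (a x : R) (l : seq R) :
  x \in l -> x <= foldr Num.max a l.
Proof.
elim: l => [|y l IHl] //=; rewrite inE le_max => /orP[/eqP->|/IHl->].
  by rewrite lexx.
by rewrite orbT.
Qed.

Lemma mem_foldr_max_head (R : realDomainType) (x0 : R) (l : seq R) :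
  l != [::] -> foldr Num.max (head x0 l) l \in l.
Proof.
case: l => [|a l] // _; have := mem_foldr_max a (a :: l).
by rewrite inE => /orP[/eqP->|]; rewrite ?mem_head.
Qed.

Section Strength.
Variables (R : realFieldType) (B : finType) (w : B -> B -> R).
Hypothesis w_sym : forall i j : B, i != j -> w i j = w j i.
Hypothesis w_ge0 : forall i j : B, i != j -> 0 <= w i j.

Lemma thr_edge_sym (S : {set B}) (s : R) : symmetric (thr_edge w S s).
Proof.
move=> x y; rewrite /thr_edge; have [->//|xy] := eqVneq x y.
by rewrite w_sym // andbCA.
Qed.

Lemma thr_edge_sub (C S : {set B}) (s : R) : C \subset S ->
  [rel x y in C | thr_edge w S s x y] =2 thr_edge w C s.
Proof.
move=> /subsetP CS x y /=; rewrite /thr_edge.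
by case xC: (x \in C); case yC: (y \in C); rewrite //= CS ?CS.
Qed.

Lemma thr_connected_from (S : {set B}) (s : R) (i : B) : i \in S ->
  {in S, forall y, connect (thr_edge w S s) i y} -> thr_connected w S s.
Proof.
move=> iS reach; apply/forall_inP => x xS; apply/forall_inP => y yS.
apply: connect_trans (reach y yS).
by rewrite (sym_connect_sym (@thr_edge_sym S s)) reach.
Qed.

Lemma thr_connected_connect (S : {set B}) (s : R) (x y : B) :
  thr_connected w S s -> x \in S -> y \in S -> connect (thr_edge w S s) x y.
Proof. by move=> /forall_inP/(_ x)+ xS yS => /(_ xS)/forall_inP/(_ y yS). Qed.

Lemma thr_connected0 (S : {set B}) : thr_connected w S 0.
Proof.
apply/forall_inP => x xS; apply/forall_inP => y yS.
have [<-|xy] := eqVneq x y; first exact: connect0.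
by apply: connect1; rewrite /thr_edge xS yS xy w_ge0.
Qed.

(* When no threshold connects [S], [strength] falls back on the junk value
   [0]; since weights are nonnegative, that threshold connects [S] too. *)
Lemma strength_connected (S : {set B}) (s : R) :
  strength w S = Some s -> thr_connected w S s.
Proof.
rewrite /strength; case: ifP => // _ [<-].
have [->|gne] := eqVneq (good_values w S) [::]; first exact: thr_connected0.
by have := mem_foldr_max_head 0 gne; rewrite mem_filter => /andP[].
Qed.

Lemma good_le_strength (S : {set B}) (t : R) :
  t \in good_values w S -> ge_ext (strength w S) (Some t).
Proof. by rewrite /strength; case: ifP => //= _; apply: le_foldr_max. Qed.

Lemma thr_connected_edge (S : {set B}) (s : R) : (1 < #|S|)%N ->
  thr_connected w S s -> exists x y, thr_edge w S s x y.
Proof.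
case/card_gt1P=> x [y [xS yS xy]] /thr_connected_connect/(_ xS yS).
case/connectP=> [[|z p] /= + yl]; first by rewrite -yl eqxx in xy.
by case/andP=> exz _; exists x, z.
Qed.

Lemma thr_connected_good (S : {set B}) (s : R) : (1 < #|S|)%N ->
  thr_connected w S s -> exists2 t, t \in good_values w S & s <= t.
Proof.
move=> S2 connS; have [x [y exy]] := thr_connected_edge S2 connS.
pose P := [pred q : B * B | thr_edge w S s q.1 q.2].
have [[u v] /= /and4P[uS vS uv su] tmin] :=
  @arg_minP _ _ _ (x, y) P (fun q => w q.1 q.2) exy.
have same : thr_edge w S (w u v) =2 thr_edge w S s.
  move=> a b; apply/and4P/and4P => -[aS bS ab h]; split => //.
    exact: le_trans su h.
  by apply: (tmin (a, b)); rewrite /P /thr_edge /= aS bS ab h.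
exists (w u v) => //; rewrite mem_filter; apply/andP; split.
  apply/forall_inP => a aS; apply/forall_inP => b bS.
  by rewrite (eq_connect same) thr_connected_connect.
apply/mapP; exists (u, v) => //.
by rewrite mem_filter mem_enum in_setX uS vS uv.
Qed.
End Strength.

Theorem theorem2 (R : realFieldType) (B : finType) (w : B -> B -> R)
  (w_sym : forall i j : B, i != j -> w i j = w j i)
  (w_ge0 : forall i j : B, i != j -> 0 <= w i j)
  (S : {set B}) (hS : (2 <= #|S|)%N) (i : B) (hi : i \in S) :
  exists C : {set B},
    [/\ C \subset S, i \in C, #|C| = (#|S| - 1)%N &
        ge_ext (strength w C) (strength w S)].
Proof.
have [s sS] : exists s, strength w S = Some s.
  by rewrite /strength leqNgt hS; eexists.
have connS := strength_connected w_ge0 sS.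
have reachS : {in S, forall y,
    connect [rel x y in S | thr_edge w S s x y] i y}.
  move=> y yS.
  by rewrite (eq_connect (thr_edge_sub w s (subxx S))) thr_connected_connect.
have [j jSi reachC] := exists_noncut_vertex hi hS reachS.
have CS : S :\ j \subset S := subD1set S j.
have iC : i \in S :\ j by rewrite !inE hi andbT eq_sym; case/setD1P: jSi.
have connC : thr_connected w (S :\ j) s.
  apply: (thr_connected_from w_sym iC) => y yC.
  by rewrite -(eq_connect (thr_edge_sub w s CS)); apply: reachC.
exists (S :\ j); split => //.
  by rewrite (cardsD1 j S) (setD1P jSi).2 add1n subn1.
rewrite sS; case: (leqP #|S :\ j| 1) => C1; first by rewrite /strength C1.
have [t tC st] := thr_connected_good C1 connC.
by case: (strength w (S :\ j)) (good_le_strength tC) => //= u /(le_trans st).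
Qed.
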